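(* Let $I\times J$ be a dyadic square and let $\Phi(x_1,\ldots,x_m,y_1,\ldots,y_n)$ be a bounded measurable function. For a dyadic square $I'\times J'$ put $\mathcal{B}_{I'\times J'}:=\big[\Phi(x_1,\ldots,x_m,y_1,\ldots,y_n)\big]_{x_1,\ldots,x_m\in I',\,y_1,\ldots,y_n\in J'}$. Then $$\Box\mathcal{B}_{I\times J}=\sum_{\substack{S\subseteq\{1,\ldots,m\},\ T\subseteq\{1,\ldots,n\}\\ |S|,|T|\ \text{even},\ (S,T)\neq(\emptyset,\emptyset)}}\Big[\big\langle\Phi(x_1,\ldots,x_m,y_1,\ldots,y_n)\big\rangle_{x_i\in I\ (i\in S),\ y_j\in J\ (j\in T)}\Big]_{x_i\in I\ (i\notin S),\ y_j\in J\ (j\notin T)} .$$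
   Context: For a dyadic interval $I$ with left half $I_l$ and right half $I_r$ and an integrable $f$, write $[f(x)]_{x\in I}:=\frac{1}{|I|}\int_I f(x)\,dx$ and $\langle f(x)\rangle_{x\in I}:=\frac{1}{|I|}\big(\int_{I_l}f(x)\,dx-\int_{I_r}f(x)\,dx\big)$. Brackets with several subscripted variables denote the corresponding iterated averages in each variable (the order is irrelevant). For a quantity $\mathcal{B}$ defined for every dyadic square, its first order difference is $\Box\mathcal{B}_{I\times J}:=\frac14\big(\mathcal{B}_{I_l\times J_l}+\mathcal{B}_{I_l\times J_r}+\mathcal{B}_{I_r\times J_l}+\mathcal{B}_{I_r\times J_r}\big)-\mathcal{B}_{I\times J}$. *)

From HB Require Import structures.
From mathcomp Require Import all_boot all_order all_algebra.
From mathcomp Require Import all_classical all_reals all_analysis.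
Set Implicit Arguments. Unset Strict Implicit. Unset Printing Implicit Defensive.
Import Order.TTheory GRing.Theory Num.Theory.
Local Open Scope classical_set_scope.
Local Open Scope ring_scope.

Section Dyadic.
Variable R : realType.

Definition dyad (j k : int) : set R :=
  `[k%:~R * (2:R) ^ (- j), (k + 1)%:~R * (2:R) ^ (- j)[%classic.

Definition dlen (j : int) : R := (2:R) ^ (- j).

Definition intI (D : set R) (f : R -> R) : R :=
  Rintegral (@lebesgue_measure R) D f.

Definition upd (p : nat) (x : 'I_p -> R) (i : 'I_p) (t : R) : 'I_p -> R :=
  fun k => if k == i then t else x k.

Variables m n : nat.
Notation Fn := (('I_m -> R) -> ('I_n -> R) -> R).

Definition avgx (i : 'I_m) (j k : int) (F : Fn) : Fn :=
  fun x y => (dlen j)^-1 * intI (dyad j k) (fun t => F (upd x i t) y).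
Definition avgy (i : 'I_n) (j k : int) (F : Fn) : Fn :=
  fun x y => (dlen j)^-1 * intI (dyad j k) (fun t => F x (upd y i t)).
Definition haarx (i : 'I_m) (j k : int) (F : Fn) : Fn :=
  fun x y => (dlen j)^-1 *
    (intI (dyad (j + 1) (2 * k)) (fun t => F (upd x i t) y)
     - intI (dyad (j + 1) (2 * k + 1)) (fun t => F (upd x i t) y)).
Definition haary (i : 'I_n) (j k : int) (F : Fn) : Fn :=
  fun x y => (dlen j)^-1 *
    (intI (dyad (j + 1) (2 * k)) (fun t => F x (upd y i t))
     - intI (dyad (j + 1) (2 * k + 1)) (fun t => F x (upd y i t))).

(* All variables
   are integrated out, so the result is evaluated at an arbitrary point (0). *)
Definition mixed (S : {set 'I_m}) (T : {set 'I_n}) (jI kI jJ kJ : int) (F : Fn) : R :=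
  let G := foldr (fun i G => if i \in S then haarx i jI kI G else avgx i jI kI G)
             F (enum 'I_m) in
  let H := foldr (fun i G => if i \in T then haary i jJ kJ G else avgy i jJ kJ G)
             G (enum 'I_n) in
  H (fun _ => 0) (fun _ => 0).

Definition Bsq (F : Fn) (j k1 k2 : int) : R := mixed finset.set0 finset.set0 j k1 j k2 F.

Definition BoxB (F : Fn) (j k1 k2 : int) : R :=
  4^-1 * (Bsq F (j + 1) (2 * k1) (2 * k2) + Bsq F (j + 1) (2 * k1) (2 * k2 + 1)
          + Bsq F (j + 1) (2 * k1 + 1) (2 * k2) + Bsq F (j + 1) (2 * k1 + 1) (2 * k2 + 1))
  - Bsq F j k1 k2.

Definition open_boxes : set (set (('I_m -> R) * ('I_n -> R))) :=
  [set B | exists a b : 'I_m -> R, exists c d : 'I_n -> R,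
     B = [set z | (forall i, a i < z.1 i < b i) /\ (forall i, c i < z.2 i < d i)]].

Definition borel_measurable (F : Fn) : Prop :=
  forall A : set R, measurable A ->
    <<s open_boxes >> ((fun z => F z.1 z.2) @^-1` A).

Definition bounded_fun2 (F : Fn) : Prop :=
  exists M : R, forall x y, `|F x y| <= M.

End Dyadic.

(* Write [.]_I and <.>_I for the average and the Haar difference in one variable over
   a dyadic interval I.  The average over the left (right) half of I is [.]_I + <.>_I
   ([.]_I - <.>_I), and both operators are linear on bounded measurable functions.
   Expanding variable by variable, B over the child square with signs (sx, sy) becomes
   the sum over (S, T) of sx^|S| sy^|T| times the mixed operator that takes <.> in the
   variables of S and T and [.] in the others.  Averaging over the four children keeps
   exactly the terms with |S| and |T| even, and subtracting B_{IxJ} removes S = T = empty. *)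

From HB Require Import structures.
From mathcomp Require Import all_boot all_order all_algebra.
From mathcomp Require Import all_classical all_reals all_analysis.
From mathcomp Require Import measurable_realfun ring.
Import Order.TTheory GRing.Theory Num.Theory.
Set Implicit Arguments. Unset Strict Implicit. Unset Printing Implicit Defensive.
Local Open Scope ring_scope.

Lemma subset_consE (I : finType) (b : I) (s : seq I) (S : {set I}) : b \notin s ->
  (S \subset b :: s) = (S :\ b \subset s).
Proof.
move=> bs; apply/fintype.subsetP/fintype.subsetP => sS i.
  by rewrite !inE => /andP[/negbTE ib /sS]; rewrite inE ib.
by have := sS i; rewrite !inE; case: eqP.
Qed.

Lemma big_subset_cons (I : finType) (M : nmodType) (b : I) (s : seq I)
    (F : {set I} -> M) : b \notin s ->
  \sum_(S : {set I} | S \subset b :: s) F S =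
  \sum_(S : {set I} | S \subset s) (F S + F (b |: S)).
Proof.
move=> bs; have bNS (S : {set I}) : S \subset s -> b \notin S.
  by move=> sS; apply: contra bs => /(fintype.subsetP sS).
rewrite big_split /= (bigID (fun S : {set I} => b \in S)) /= addrC; congr (_ + _).
  apply: eq_bigl => S; rewrite subset_consE //.
  apply/andP/idP => [[sS bS]|sS]; last first.
    split; last exact: bNS.
    by apply/fintype.subsetP => i /setD1P[_ /(fintype.subsetP sS)].
  apply/fintype.subsetP => i iS; apply: (fintype.subsetP sS).
  by rewrite in_setD1 iS andbT; apply/eqP => ib; rewrite -ib iS in bS.
rewrite (reindex_onto (fun S => b |: S) (fun S => S :\ b)) /=; last first.
  by move=> S /andP[_ bS]; rewrite finset.setD1K.
apply: eq_bigl => S; rewrite subset_consE // finset.setU11 andbT.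
apply/andP/idP => [[sS /eqP <-]//|sS]; split; first by rewrite finset.setU1K ?bNS.
by rewrite finset.setU1K ?bNS.
Qed.

Section LinearOn.
Variables (K : pzRingType) (V : lmodType K).

Record subspace_closed (dom : V -> Prop) : Prop := SubspaceClosed {
  closed0 : dom 0;
  closedD : forall u v, dom u -> dom v -> dom (u + v);
  closedZ : forall c v, dom v -> dom (c *: v) }.

Variables (dom : V -> Prop) (dom_closed : subspace_closed dom).

Record linear_on (f : V -> V) : Prop := LinearOn {
  linear_on_dom : forall v, dom v -> dom (f v);
  linear_onD : forall u v, dom u -> dom v -> f (u + v) = f u + f v;
  linear_onZ : forall c v, dom v -> f (c *: v) = c *: f v }.

Section Combinations.
Variables (T : Type) (P : pred T) (w : T -> K) (G : T -> V).
Hypothesis domG : forall t, dom (G t).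

Lemma dom_comb r : dom (\sum_(t <- r | P t) w t *: G t).
Proof.
case: dom_closed => dom0 domD domZ.
by apply: big_ind => // t _; exact: domZ.
Qed.

Lemma linear_on_comb f r : linear_on f ->
  f (\sum_(t <- r | P t) w t *: G t) = \sum_(t <- r | P t) w t *: f (G t).
Proof.
case=> fdom fD fZ; have f0 : f 0 = 0.
  by rewrite -[in f _](scale0r 0) fZ ?scale0r //; exact: closed0.
elim: r => [|t s IH]; first by rewrite !big_nil.
rewrite !big_cons; case: (P t); last exact: IH.
by rewrite fD ?fZ ?IH //; [exact: closedZ | exact: dom_comb].
Qed.

End Combinations.

Lemma closedB u v : dom u -> dom v -> dom (u - v).
Proof.
case: dom_closed => _ domD domZ gu gv.
by rewrite -scaleN1r; apply: domD => //; exact: domZ.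
Qed.

Lemma linear_on_comp f g : linear_on f -> linear_on g -> linear_on (f \o g).
Proof.
move=> [fdom fD fZ] [gdom gD gZ]; split=> [v gv|u v gu gv|c v gv] /=.
- exact/fdom/gdom.
- by rewrite gD // fD //; exact: gdom.
- by rewrite gZ // fZ //; exact: gdom.
Qed.

Section Expansion.
Variables (I : finType) (a h : I -> V -> V).
Hypotheses (ha : forall i, linear_on (a i)) (hh : forall i, linear_on (h i)).

Definition select_op (S : {set I}) (s : seq I) (v : V) : V :=
  foldr (fun i w => if i \in S then h i w else a i w) v s.

Lemma select_op_cons S i s :
  select_op S (i :: s) = (if i \in S then h i else a i) \o select_op S s.
Proof. by apply/funext => v /=; case: (i \in S). Qed.

Lemma select_op_set0 s v : select_op finset.set0 s v = foldr a v s.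
Proof. by elim: s => //= i s ->; rewrite inE. Qed.

Lemma select_op_linear_on S s : linear_on (select_op S s).
Proof.
elim: s => [|i s IH]; first by split.
by rewrite select_op_cons; apply: linear_on_comp IH; case: (i \in S).
Qed.

Lemma eq_select_op (S S' : {set I}) s : {in s, S =i S'} -> select_op S s = select_op S' s.
Proof.
elim: s => [//|i s IH] eqSS'; rewrite !select_op_cons eqSS' ?mem_head ?IH // => k ks.
by apply: eqSS'; rewrite inE ks orbT.
Qed.

Variables (sg : K) (l : I -> V -> V).
Hypothesis hl : forall i v, dom v -> l i v = a i v + sg *: h i v.

Lemma foldr_expand s v : uniq s -> dom v ->
  foldr l v s = \sum_(S : {set I} | S \subset s) sg ^+ #|S| *: select_op S s v.
Proof.
move=> + gv; elim: s => [_|b s IH /andP[bs us]].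
  rewrite (big_pred1 finset.set0) ?cards0 ?scale1r // => S /=.
  apply/fintype.subsetP/eqP => [sS|-> i]; last by rewrite inE.
  by apply/setP => i; rewrite inE; apply/negbTE/negP => /sS.
have domop S : dom (select_op S s v) by apply: linear_on_dom (select_op_linear_on S s) _ gv.
rewrite [LHS]/= hl ?IH //; last exact: dom_comb.
rewrite (linear_on_comb _ _ domop _ (ha b)) (linear_on_comb _ _ domop _ (hh b)).
rewrite big_subset_cons // scaler_sumr -big_split.
apply: eq_bigr => S sS; have bS : b \notin S by apply: contra bs => /(fintype.subsetP sS).
rewrite !select_op_cons /= finset.setU11 (negbTE bS) cardsU1 bS add1n exprS scalerA.
congr (_ + _ *: h b (_ v)); apply: eq_select_op => i is_; rewrite !inE.
by case: eqP => // ib; rewrite -ib is_ in bs.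
Qed.

Lemma foldr_expand_enum v : dom v ->
  foldr l v (enum I) = \sum_(S : {set I}) sg ^+ #|S| *: select_op S (enum I) v.
Proof.
move=> gv; rewrite foldr_expand ?enum_uniq //; apply: eq_bigl => S.
by apply/fintype.subsetP => i _; rewrite mem_enum.
Qed.
End Expansion.
End LinearOn.

Lemma sign_average (R : numFieldType) (p q : nat) :
  4^-1 * (1 ^+ p * 1 ^+ q + 1 ^+ p * (-1) ^+ q + (-1) ^+ p * 1 ^+ q + (-1) ^+ p * (-1) ^+ q)
  = (~~ odd p && ~~ odd q)%:R :> R.
Proof.
rewrite !expr1n -[(-1) ^+ p]signr_odd -[(-1) ^+ q]signr_odd.
by case: (odd p); case: (odd q); rewrite /= ?expr0 ?expr1; field.
Qed.

Lemma even_sign_average (R : numFieldType) (I J : finType) (M : {set I} -> {set J} -> R) :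
  let E sa sb := \sum_(S : {set I}) \sum_(T : {set J}) sa ^+ #|S| * sb ^+ #|T| * M S T in
  4^-1 * (E 1 1 + E 1 (-1) + E (-1) 1 + E (-1) (-1)) - M finset.set0 finset.set0 =
  \sum_(S : {set I} | ~~ odd #|S|)
    \sum_(T : {set J} | ~~ odd #|T| && ((S != finset.set0) || (T != finset.set0))) M S T.
Proof.
move=> E; have -> : 4^-1 * (E 1 1 + E 1 (-1) + E (-1) 1 + E (-1) (-1)) =
    \sum_(S : {set I} | ~~ odd #|S|) \sum_(T : {set J} | ~~ odd #|T|) M S T.
  rewrite /E -!big_split mulr_sumr [RHS]big_mkcond; apply: eq_bigr => S _.
  rewrite -!big_split mulr_sumr; case: (boolP (odd #|S|)) => oS /=.
    by rewrite big1 // => T _; rewrite -!mulrDl mulrA sign_average oS mul0r.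
  rewrite [RHS]big_mkcond; apply: eq_bigr => T _; rewrite -!mulrDl mulrA sign_average oS /=.
  by case: (odd #|T|); rewrite ?mul1r ?mul0r.
rewrite (bigD1 finset.set0) ?cards0 //= [RHS](bigD1 finset.set0) ?cards0 //=.
rewrite eqxx [in LHS](bigD1 finset.set0) ?cards0 //= addrAC -addrA addrAC subrr add0r.
rewrite addrC; congr (_ + _); apply: eq_bigr => S /andP[_ nS].
by apply: eq_bigl => T; rewrite nS andbT.
Qed.

Local Open Scope classical_set_scope.

Lemma exists_nat_bound (R : archiNumDomainType) (I : finType) (f : I -> R) :
  exists N : nat, forall k, `|f k| < N%:R.
Proof.
exists (\max_k Num.Def.archi_bound `|f k|)%N => k.
apply: lt_le_trans (archi_boundP (normr_ge0 _)) _.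
by rewrite ler_nat; apply: leq_bigmax.
Qed.

Definition pairs (R : realType) (m n : nat) := (('I_m -> R) * ('I_n -> R))%type.
HB.instance Definition _ (R : realType) m n := Choice.on (pairs R m n).
HB.instance Definition _ (R : realType) m n :=
  isPointed.Build (pairs R m n) (fun=> 0, fun=> 0).

Definition borel_pairs (R : realType) m n :=
  @g_sigma_algebraType (pairs R m n) (@open_boxes R m n).

Section BorelPairs.
Variables (R : realType) (m n : nat).
Notation Fn := (('I_m -> R) -> ('I_n -> R) -> R).
Notation P := (borel_pairs R m n).

Definition uncurry_fn (F : Fn) (z : P) : R := F z.1 z.2.

Lemma borel_measurableE F : borel_measurable F <-> measurable_fun setT (uncurry_fn F).
Proof.
split=> [mF _ A mA | mF A mA]; first by rewrite setTI; exact: mF.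
by have := mF measurableT A mA; rewrite setTI.
Qed.

Definition partial_box (px : pred 'I_m) (py : pred 'I_n)
    (a b : 'I_m -> R) (c d : 'I_n -> R) : set P :=
  [set z | (forall k, px k -> a k < z.1 k < b k) /\ (forall k, py k -> c k < z.2 k < d k)].

Lemma measurable_partial_box px py a b c d : measurable (partial_box px py a b c d).
Proof.
pose relax (p : pred _) (e : _ -> R) (r : R) := fun k => if p k then e k else r.
pose box_N (N : nat) := partial_box predT predT (relax _ px a (- N%:R)) (relax _ px b N%:R)
  (relax _ py c (- N%:R)) (relax _ py d N%:R).
have -> : partial_box px py a b c d = \bigcup_N box_N N.
  apply/seteqP; split=> [z [zx zy] | z [N _ [zx zy]]]; last first.
    split=> k pk; [have := zx k isT | have := zy k isT]; by rewrite /relax pk.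
  have [N1 hN1] := exists_nat_bound z.1; have [N2 hN2] := exists_nat_bound z.2.
  exists (N1 + N2)%N => //; split=> k _; rewrite /relax.
    case: ifP => [/zx //|_]; rewrite -ltr_norml natrD.
    by apply: lt_le_trans (hN1 k) _; rewrite lerDl.
  case: ifP => [/zy //|_]; rewrite -ltr_norml natrD.
  by apply: lt_le_trans (hN2 k) _; rewrite lerDr.
apply: bigcupT_measurable => N; apply: sub_sigma_algebra; do 4 eexists.
by apply/seteqP; split=> z [zx zy]; split=> k //=; by [apply: zx | apply: zy].
Qed.

Definition update_x (i : 'I_m) (p : P * R) : P := (upd p.1.1 i p.2, p.1.2).
Definition update_y (i : 'I_n) (p : P * R) : P := (p.1.1, upd p.1.2 i p.2).

Lemma measurable_update_x i : measurable_fun setT (update_x i).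
Proof.
apply: (@measurability _ _ _ P setT _ (@open_boxes R m n)) => //.
move=> _ [_ [a [b [c [d ->]]] <-]].
have -> : setT `&` update_x i @^-1` [set z : P | (forall k, a k < z.1 k < b k) /\
    (forall k, c k < z.2 k < d k)] = partial_box (predC1 i) predT a b c d `*` `]a i, b i[.
  apply/seteqP; split=> [[w t] [_ [/= wt wy]] | [w t] [[wx wy] /=]].
    split; last by have := wt i; rewrite /upd eqxx /= in_itv.
    by split=> k ki; [have := wt k; rewrite /upd (negbTE ki) | exact: wy].
  rewrite in_itv => ti; split=> //; split=> k; last exact: wy.
  by rewrite /upd; case: eqP => [-> //|/eqP ki]; exact: wx.
by apply: measurableX; [exact: measurable_partial_box | exact: measurable_itv].
Qed.

Lemma measurable_update_y i : measurable_fun setT (update_y i).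
Proof.
apply: (@measurability _ _ _ P setT _ (@open_boxes R m n)) => //.
move=> _ [_ [a [b [c [d ->]]] <-]].
have -> : setT `&` update_y i @^-1` [set z : P | (forall k, a k < z.1 k < b k) /\
    (forall k, c k < z.2 k < d k)] = partial_box predT (predC1 i) a b c d `*` `]c i, d i[.
  apply/seteqP; split=> [[w t] [_ [/= wx wt]] | [w t] [[wx wy] /=]].
    split; last by have := wt i; rewrite /upd eqxx /= in_itv.
    by split=> k ki; [exact: wx | have := wt k; rewrite /upd (negbTE ki)].
  rewrite in_itv => ti; split=> //; split=> k; first exact: wx.
  by rewrite /upd; case: eqP => [-> //|/eqP ki]; exact: wy.
by apply: measurableX; [exact: measurable_partial_box | exact: measurable_itv].
Qed.

Definition bounded_measurable (F : Fn) := borel_measurable F /\ bounded_fun2 F.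

Lemma bounded_measurable_closed : subspace_closed bounded_measurable.
Proof.
split=> [|F G [mF [M FM]] [mG [N GN]]|c F [mF [M FM]]]; split.
- by apply/borel_measurableE; exact: measurable_cst.
- by exists 0 => x y; rewrite normr0.
- by apply/borel_measurableE; apply: measurable_funD; exact/borel_measurableE.
- by exists (M + N) => x y; apply: le_trans (ler_normD _ _) (lerD (FM x y) (GN x y)).
- apply/borel_measurableE; apply: (measurable_funM (f := cst c)) => //.
  exact/borel_measurableE.
- by exists (`|c| * M) => x y; rewrite normrM ler_wpM2l.
Qed.
End BorelPairs.

Lemma bounded_fun_on (R : realType) (T : Type) (A : set T) (f : T -> R) (M : R) :
  (forall x, `|f x| <= M) -> [bounded f x | x in A].
Proof.
move=> fM; exists M; split; first exact: num_real.
by move=> M' MM' x _; exact: le_trans (fM x) (ltW MM').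
Qed.

Section Slices.
Variables (R : realType) (m n : nat).
Notation Fn := (('I_m -> R) -> ('I_n -> R) -> R).
Notation P := (borel_pairs R m n).
Notation leb := (@lebesgue_measure R).

Variables (phi : P * R -> P) (mphi : measurable_fun setT phi).

Definition slice (F : Fn) (z : P) (t : R) : R := uncurry_fn F (phi (z, t)).

Definition slice_integral (D : set R) (F : Fn) : Fn :=
  fun x y => intI D (slice F (x, y)).

Lemma measurable_slice F z : borel_measurable F -> measurable_fun setT (slice F z).
Proof.
by move=> /borel_measurableE mF; apply: measurableT_comp mF _; exact: measurable_fun_pair2.
Qed.

Section FiniteDomain.
Variables (D : set R) (mD : measurable D) (finD : (leb D < +oo)%E).

Lemma integrable_slice F z : bounded_measurable F -> leb.-integrable D (EFin \o slice F z).
Proof.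
move=> [mF [M FM]]; apply: measurable_bounded_integrable => //.
  exact: measurable_funS (measurable_slice z mF).
by apply: (@bounded_fun_on _ _ _ _ M) => t; exact: FM.
Qed.

(* The integral over [D] is an integral over [R] of [(F \o phi) * 1_D], whose
   measurability in the parameter is given by Fubini-Tonelli. *)
Lemma measurable_slice_integral F : borel_measurable F -> borel_measurable (slice_integral D F).
Proof.
move=> /borel_measurableE mF; apply/borel_measurableE.
pose g : (P * R)%type -> \bar R := EFin \o ((uncurry_fn F \o phi) \* (\1_D \o snd)).
have mg : measurable_fun [set: (P * R)%type] g.
  apply/measurable_EFinP; apply: measurable_funM; first exact: measurableT_comp mF mphi.
  by apply: measurableT_comp; [exact: measurable_indic | exact: measurable_snd].
have -> : uncurry_fn (slice_integral D F) =
    fine \o (fun z => fubini_F leb g^\+ z - fubini_F leb g^\- z)%E.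
  apply/funext => -[x y]; rewrite /uncurry_fn /slice_integral /intI /Rintegral /=; congr fine.
  rewrite integral_mkcond integralE; congr (_ - _)%E; apply: eq_integral => t _;
    rewrite epatch_indic /g /=; [by rewrite !funeposE | by rewrite !funenegE].
apply: measurableT_comp; first exact: fine_measurable.
apply: emeasurable_funB; apply: measurable_fun_fubini_tonelli_F.
- exact: measurable_funepos.
- exact: funepos_ge0.
- exact: measurable_funeneg.
- exact: funeneg_ge0.
Qed.

Lemma bounded_slice_integral F : bounded_measurable F -> bounded_fun2 (slice_integral D F).
Proof.
move=> bmF; have [mF [M FM]] := bmF; exists (M * fine (leb D)) => x y.
rewrite /slice_integral /intI.
apply: le_trans (le_normr_Rintegral (mu := leb) mD (integrable_slice (x, y) bmF)) _.
rewrite -Rintegral_cst //; apply: le_Rintegral => //.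
- apply: measurable_bounded_integrable => //.
    apply: measurableT_comp; first exact: normr_measurable.
    exact: measurable_funS (measurable_slice _ mF).
  by apply: (@bounded_fun_on _ _ _ _ M) => t; rewrite normr_id; exact: FM.
- by apply: measurable_bounded_integrable => //; exact: (@bounded_fun_on _ _ _ _ `|M|).
- by move=> t _; exact: FM.
Qed.

Lemma bounded_measurable_slice_integral F :
  bounded_measurable F -> bounded_measurable (slice_integral D F).
Proof.
move=> bmF; split; last exact: bounded_slice_integral.
by apply: measurable_slice_integral; case: bmF.
Qed.

Lemma slice_integralD F G : bounded_measurable F -> bounded_measurable G ->
  slice_integral D (F + G) = slice_integral D F + slice_integral D G.
Proof.
move=> bmF bmG; apply/funext => x; apply/funext => y.
by apply: RintegralD => //; exact: integrable_slice.
Qed.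

Lemma slice_integralZ c F : bounded_measurable F ->
  slice_integral D (c *: F) = c *: slice_integral D F.
Proof.
move=> bmF; apply/funext => x; apply/funext => y.
by apply: RintegralZl => //; exact: integrable_slice.
Qed.
End FiniteDomain.

Lemma slice_integral_setU D1 D2 F : measurable D1 -> measurable D2 ->
  (leb (D1 `|` D2) < +oo)%E -> [disjoint D1 & D2] -> bounded_measurable F ->
  slice_integral (D1 `|` D2) F = slice_integral D1 F + slice_integral D2 F.
Proof.
move=> mD1 mD2 finD disD bmF; apply/funext => x; apply/funext => y.
apply: Rintegral_setU => //; apply: integrable_slice => //.
exact: measurableU.
Qed.
End Slices.

Section Dyadic.
Variable R : realType.

Lemma dlen_gt0 j : 0 < dlen R j.
Proof. exact: exprz_gt0. Qed.

Lemma dlenS j : dlen R j = 2 * dlen R (j + 1).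
Proof.
rewrite /dlen (_ : - j = - (j + 1) + 1); last by rewrite opprD addrNK.
by rewrite expfzDr ?expr1z 1?mulrC // pnatr_eq0.
Qed.

Lemma dyadE j k : @dyad R j k = `[k%:~R * dlen R j, (k + 1)%:~R * dlen R j[.
Proof. by []. Qed.

Lemma dyad_split j k :
  @dyad R j k = @dyad R (j + 1) (2 * k) `|` @dyad R (j + 1) (2 * k + 1).
Proof.
have d_gt0 := dlen_gt0 (j + 1); rewrite !dyadE dlenS -itv_bndbnd_setU; last 2 first.
- by rewrite bnd_simp ler_pM2r // ler_int lerDl.
- by rewrite bnd_simp ler_pM2r // ler_int lerDl.
have lowE : k%:~R * (2 * dlen R (j + 1)) = (2 * k)%:~R * dlen R (j + 1).
  by rewrite intrM; ring.
have upE : (k + 1)%:~R * (2 * dlen R (j + 1)) = (2 * k + 1 + 1)%:~R * dlen R (j + 1).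
  by rewrite !intrD intrM; ring.
by rewrite lowE upE.
Qed.

Lemma dyad_disjoint j k : [disjoint @dyad R (j + 1) (2 * k) & @dyad R (j + 1) (2 * k + 1)].
Proof.
apply: lt_disjoint => x y; rewrite !in_itv /= => /andP[_ xc] /andP[cy _].
exact: lt_le_trans xc cy.
Qed.

Lemma lebesgue_dyad_finite j k : (@lebesgue_measure R (@dyad R j k) < +oo)%E.
Proof. by rewrite /dyad lebesgue_measure_itv; case: ifP => _; rewrite ltry. Qed.
End Dyadic.

Section SliceAverages.
Variables (R : realType) (m n : nat).
Notation Fn := (('I_m -> R) -> ('I_n -> R) -> R).
Variables (phi : borel_pairs R m n * R -> borel_pairs R m n) (mphi : measurable_fun setT phi).

Let dyad_measurable j k : measurable (@dyad R j k) := measurable_itv _.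

Let bmI j k := bounded_measurable_slice_integral mphi (dyad_measurable j k)
  (lebesgue_dyad_finite R j k).
Let dyadD j k := slice_integralD mphi (dyad_measurable j k) (lebesgue_dyad_finite R j k).
Let dyadZ j k := slice_integralZ mphi (dyad_measurable j k) (lebesgue_dyad_finite R j k).

Definition slice_avg j k (F : Fn) : Fn := (dlen R j)^-1 *: slice_integral phi (dyad j k) F.

Definition slice_haar j k (F : Fn) : Fn := (dlen R j)^-1 *:
  (slice_integral phi (dyad (j + 1) (2 * k)) F - slice_integral phi (dyad (j + 1) (2 * k + 1)) F).

Lemma linear_on_slice_avg j k : linear_on (@bounded_measurable R m n) (slice_avg j k).
Proof.
split=> [F bmF | F G bmF bmG | c F bmF]; rewrite /slice_avg.
- by apply: (closedZ (bounded_measurable_closed R m n)); exact: bmI.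
- by rewrite dyadD // scalerDr.
- by rewrite dyadZ // !scalerA mulrC.
Qed.

Lemma linear_on_slice_haar j k : linear_on (@bounded_measurable R m n) (slice_haar j k).
Proof.
have closed := bounded_measurable_closed R m n.
split=> [F bmF | F G bmF bmG | c F bmF]; rewrite /slice_haar.
- by apply: (closedZ closed); apply: (closedB closed); exact: bmI.
- by rewrite !dyadD // opprD addrACA scalerDr.
- by rewrite !dyadZ // -scalerBr !scalerA mulrC.
Qed.

Section Refinement.
Variables (j k : int) (F : Fn) (bmF : bounded_measurable F).

Let slice_integral_halves : slice_integral phi (dyad j k) F =
  slice_integral phi (dyad (j + 1) (2 * k)) F + slice_integral phi (dyad (j + 1) (2 * k + 1)) F.
Proof.
rewrite {1}dyad_split slice_integral_setU //; last exact: dyad_disjoint.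
- exact: dyad_measurable.
- exact: dyad_measurable.
- by rewrite -dyad_split; exact: lebesgue_dyad_finite.
Qed.

Lemma slice_avg_left : slice_avg (j + 1) (2 * k) F = slice_avg j k F + slice_haar j k F.
Proof.
rewrite /slice_avg /slice_haar slice_integral_halves -scalerDr addrACA subrr addr0.
rewrite -mulr2n -scaler_nat scalerA (dlenS R j); congr (_ *: _).
by field; rewrite gt_eqF ?dlen_gt0.
Qed.

Lemma slice_avg_right : slice_avg (j + 1) (2 * k + 1) F = slice_avg j k F - slice_haar j k F.
Proof.
rewrite /slice_avg /slice_haar slice_integral_halves -scalerBr.
set IL := slice_integral phi (dyad (j + 1) (2 * k)) F.
set IR := slice_integral phi (dyad (j + 1) (2 * k + 1)) F.
rewrite opprB addrCA [IL + _]addrC addrK.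
rewrite -mulr2n -scaler_nat scalerA (dlenS R j); congr (_ *: _).
by field; rewrite gt_eqF ?dlen_gt0.
Qed.
End Refinement.
End SliceAverages.

Lemma sum_scale_apply2 (R : realType) (X Y I : Type) (r : seq I) (P : pred I)
    (w : I -> R) (G : I -> X -> Y -> R) (x : X) (y : Y) :
  (\sum_(i <- r | P i) w i *: G i) x y = \sum_(i <- r | P i) w i * G i x y.
Proof. by elim/big_rec2: _ => // i a H _ <-. Qed.

Section DyadicSquares.
Variables (R : realType) (m n : nat).
Notation Fn := (('I_m -> R) -> ('I_n -> R) -> R).

Lemma Bsq_foldr (F : Fn) j k1 k2 : Bsq F j k1 k2 =
  foldr (fun i => avgy i j k2) (foldr (fun i => avgx i j k1) F (enum 'I_m)) (enum 'I_n)
    (fun=> 0) (fun=> 0).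
Proof.
rewrite -(select_op_set0 _ (fun i => haarx i j k1)).
by rewrite -(select_op_set0 _ (fun i => haary i j k2)).
Qed.

Variables (j kI kJ : int) (Phi : Fn) (bmPhi : bounded_measurable Phi).

Lemma children_expansion (ox oy : int) (sa sb : R) :
  (forall (i : 'I_m) (F : Fn), bounded_measurable F ->
     avgx i (j + 1) ox F = avgx i j kI F + sa *: haarx i j kI F) ->
  (forall (i : 'I_n) (F : Fn), bounded_measurable F ->
     avgy i (j + 1) oy F = avgy i j kJ F + sb *: haary i j kJ F) ->
  Bsq Phi (j + 1) ox oy =
  \sum_(S : {set 'I_m}) \sum_(T : {set 'I_n}) sa ^+ #|S| * sb ^+ #|T| * mixed S T j kI j kJ Phi.
Proof.
move=> refine_x refine_y; have closed := bounded_measurable_closed R m n.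
(* [avgx i] and [haarx i] are, by conversion, [slice_avg] and [slice_haar] along [update_x i]. *)
have lin_ax i : linear_on (@bounded_measurable R m n) (avgx i j kI).
  exact: linear_on_slice_avg (measurable_update_x i) j kI.
have lin_hx i : linear_on (@bounded_measurable R m n) (haarx i j kI).
  exact: linear_on_slice_haar (measurable_update_x i) j kI.
have lin_ay i : linear_on (@bounded_measurable R m n) (avgy i j kJ).
  exact: linear_on_slice_avg (measurable_update_y i) j kJ.
have lin_hy i : linear_on (@bounded_measurable R m n) (haary i j kJ).
  exact: linear_on_slice_haar (measurable_update_y i) j kJ.
pose X S := select_op (fun i => avgx i j kI) (fun i => haarx i j kI) S (enum 'I_m) Phi.
have bmX S : bounded_measurable (X S).
  exact: (linear_on_dom (select_op_linear_on lin_ax lin_hx S (enum 'I_m)) bmPhi).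
rewrite Bsq_foldr (foldr_expand_enum closed lin_ax lin_hx refine_x bmPhi).
rewrite (foldr_expand_enum closed lin_ay lin_hy refine_y (dom_comb closed _ _ bmX _)).
rewrite sum_scale_apply2 exchange_big /=; apply: eq_bigr => T _.
rewrite (linear_on_comb closed _ _ bmX _ (select_op_linear_on lin_ay lin_hy T _)).
rewrite sum_scale_apply2 mulr_sumr; apply: eq_bigr => S _.
by rewrite mulrCA mulrA.
Qed.
End DyadicSquares.

Theorem theorem2 (R : realType) (m n : nat) (j kI kJ : int)
  (Phi : ('I_m -> R) -> ('I_n -> R) -> R) :
  borel_measurable Phi -> bounded_fun2 Phi ->
  BoxB Phi j kI kJ =
  \sum_(S : {set 'I_m} | ~~ odd #|S|)
    \sum_(T : {set 'I_n} | ~~ odd #|T| && ((S != finset.set0) || (T != finset.set0)))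
      mixed S T j kI j kJ Phi.
Proof.
move=> mPhi bPhi; have bmPhi : bounded_measurable Phi by split.
rewrite -(even_sign_average (fun S T => mixed S T j kI j kJ Phi)) /BoxB.
congr (4^-1 * (_ + _ + _ + _) - _); apply: (children_expansion bmPhi).
all: move=> i F bmF; rewrite ?scale1r ?scaleN1r.
all: first [ exact: slice_avg_left (measurable_update_x i) j kI F bmF
           | exact: slice_avg_right (measurable_update_x i) j kI F bmF
           | exact: slice_avg_left (measurable_update_y i) j kJ F bmF
           | exact: slice_avg_right (measurable_update_y i) j kJ F bmF ].
Qed.
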